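(* Let $E=(C,V)$ be an approval election with $C$ nonempty and $V$ nonempty. Then $\mathrm{av\text{-}agr}(E)=1$ if and only if $E$ is an identity election, and $\mathrm{av\text{-}agr}(E)=0$ if and only if every candidate $c\in C$ is approved by exactly half of the voters, i.e. $|A(c)|=|V|/2$ for all $c\in C$.
   Context: An (approval) election is a pair $E=(C,V)$ where $C=\{c_1,\dots,c_m\}$ is a set of candidates and $V=(v_1,\dots,v_n)$ is a collection (with possible repetitions) of voters; each vote $v_i$ is a binary vector in $\{0,1\}^m$, with $v_i[j]=1$ meaning voter $v_i$ approves $c_j$. For a candidate $c$, $A(c)$ is the set of voters approving $c$. An identity election is one in which all votes are identical (all voters approve the same set of candidates). The Approval Agreement index is $\mathrm{av\text{-}agr}(E)=\frac{1}{|C|}\sum_{c\in C}\left|1-2\frac{|A(c)|}{|V|}\right|$. *)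

From mathcomp Require Import all_boot all_order all_algebra.
Set Implicit Arguments. Unset Strict Implicit. Unset Printing Implicit Defensive.
Import Order.TTheory GRing.Theory Num.Theory.
Local Open Scope ring_scope.

(* An approval election with m candidates ('I_m) and n voters ('I_n);
   voter i approves candidate j iff  E i j = true.
   Voters are indexed (so repetitions of identical votes are allowed). *)
Definition election (m n : nat) := {ffun 'I_n -> {ffun 'I_m -> bool}}.

Definition approvers m n (E : election m n) (c : 'I_m) : {set 'I_n} :=
  [set v | E v c].

Definition identity_election m n (E : election m n) : Prop :=
  forall v w : 'I_n, E v = E w.

Definition av_agr m n (E : election m n) : rat :=
  (m%:R)^-1 * \sum_(c < m) `| 1 - 2 * ((#|approvers E c|)%:R / n%:R) |.

From mathcomp Require Import all_boot all_order all_algebra.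
From mathcomp Require Import lra.
Set Implicit Arguments. Unset Strict Implicit. Unset Printing Implicit Defensive.
Import Order.TTheory GRing.Theory Num.Theory.
Local Open Scope ring_scope.

(* The index is the mean of the per-candidate agreements [|1 - 2 t|], each in
   [0, 1] since the approval share [t] lies in [0, 1].  A mean of numbers
   in [0, 1] equals 1 (resp. 0) iff all of them do, and [|1 - 2 t|] is 1
   exactly at the shares 0 and 1 (nobody or everybody approves) and 0
   exactly at the share 1/2. *)

Section Mean.

Variables (R : numFieldType) (I : finType) (x : I -> R).
Hypothesis I_gt0 : (0 < #|I|)%N.

Let card_neq0 : #|I|%:R != 0 :> R.
Proof. by rewrite pnatr_eq0 -lt0n. Qed.

Lemma mean_eq1P : (forall i, x i <= 1) ->
  #|I|%:R^-1 * \sum_i x i = 1 <-> forall i, x i = 1.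
Proof.
move=> x_le1; split => [mean1 i | x1]; last first.
  by rewrite (eq_bigr (fun=> 1)) // sumr_const mulVf.
have sum_eq : \sum_i x i = #|I|%:R by apply: divr1_eq; rewrite mulrC.
have sum_gap0 : \sum_i (1 - x i) = 0 by rewrite sumrB sumr_const sum_eq subrr.
have gap_ge0 j : true -> 0 <= 1 - x j by rewrite subr_ge0.
by have /eqP := psumr_eq0P gap_ge0 sum_gap0 (i := i) isT; rewrite subr_eq0 => /eqP.
Qed.

Lemma mean_eq0P : (forall i, 0 <= x i) ->
  #|I|%:R^-1 * \sum_i x i = 0 <-> forall i, x i = 0.
Proof.
move=> x_ge0; split => [/eqP | x0]; last by rewrite big1 ?mulr0.
rewrite mulf_eq0 invr_eq0 (negbTE card_neq0) => /eqP sum0 i.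
exact: psumr_eq0P (fun j _ => x_ge0 j) sum0 i isT.
Qed.

End Mean.

Definition agreement (R : numDomainType) (t : R) : R := `|1 - 2 * t|.

Section Agreement.

Variable R : realFieldType.
Implicit Types t : R.

Lemma agreement_ge0 t : 0 <= agreement t.
Proof. exact: normr_ge0. Qed.

Lemma agreement_le1 t : 0 <= t <= 1 -> agreement t <= 1.
Proof. by case/andP=> t_ge0 t_le1; rewrite /agreement ler_norml; lra. Qed.

Lemma agreement_eq1 t : 0 <= t <= 1 -> agreement t = 1 <-> t = 0 \/ t = 1.
Proof.
case/andP=> t_ge0 t_le1; rewrite /agreement; split => [|[]->]; last 2 first.
- by rewrite mulr0 subr0 normr1.
- by rewrite mulr1 ler0_norm; lra.
have [side_ge0|side_lt0] := lerP 0 (1 - 2 * t).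
  by rewrite ger0_norm // => ?; left; lra.
by rewrite ltr0_norm // => ?; right; lra.
Qed.

Lemma agreement_eq0 t : agreement t = 0 <-> t = 2^-1.
Proof.
rewrite /agreement; split => [/normr0P|->]; last by rewrite mulfV ?pnatr_eq0 // subrr normr0.
by rewrite subr_eq0 => /eqP two_t; lra.
Qed.

End Agreement.

Section NatRatio.

Variables (R : numFieldType) (k n : nat).

Lemma natr_ratio_ge0_le1 : (k <= n)%N -> 0 <= (k%:R / n%:R : R) <= 1.
Proof.
move=> k_le_n; rewrite divr_ge0 ?ler0n //=.
have [->|n_gt0] := posnP n; first by rewrite invr0 mulr0.
by rewrite ler_pdivrMr ?ltr0n // mul1r ler_nat.
Qed.

Hypothesis n_gt0 : (0 < n)%N.

Let n_neq0 : n%:R != 0 :> R.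
Proof. by rewrite pnatr_eq0 -lt0n. Qed.

Lemma natr_ratio_eq0 : k%:R / n%:R = 0 :> R <-> k = 0%N.
Proof.
split => [/eqP|->]; last by rewrite mul0r.
by rewrite mulf_eq0 invr_eq0 (negbTE n_neq0) orbF pnatr_eq0 => /eqP.
Qed.

Lemma natr_ratio_eq1 : k%:R / n%:R = 1 :> R <-> k = n.
Proof.
split => [/divr1_eq/eqP|->]; last exact: divff.
by rewrite eqr_nat => /eqP.
Qed.

Lemma natr_ratio_eq_half : k%:R / n%:R = 2^-1 :> R <-> k%:R = n%:R / 2 :> R.
Proof.
split => [k_n | ->]; last by rewrite mulrAC divff ?mul1r.
by rewrite -(divfK n_neq0 k%:R) k_n mulrC.
Qed.

End NatRatio.

Section Election.

Variables (m n : nat) (E : election m n).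

Definition approval_share (c : 'I_m) : rat := #|approvers E c|%:R / n%:R.

Lemma av_agrE : av_agr E = m%:R^-1 * \sum_(c < m) agreement (approval_share c).
Proof. by []. Qed.

Lemma approval_share_ge0_le1 c : 0 <= approval_share c <= 1.
Proof.
by apply: natr_ratio_ge0_le1; rewrite -[X in (_ <= X)%N]card_ord max_card.
Qed.

Hypothesis n_gt0 : (0 < n)%N.

Lemma identity_electionP : identity_election E <->
  forall c, #|approvers E c| = 0%N \/ #|approvers E c| = n.
Proof.
split => [same c | unanimous v w].
  pose v0 := Ordinal n_gt0.
  have [v0c|v0Nc] := boolP (E v0 c); [right | left].
    have -> : approvers E c = setT by apply/setP => v; rewrite !inE (same v v0).
    by rewrite cardsT card_ord.
  apply/eqP; rewrite cards_eq0; apply/eqP/setP => v.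
  by rewrite !inE (same v v0) (negbTE v0Nc).
apply/ffunP => c; case: (unanimous c) => [/cards0_eq | card_n].
  by move=> /setP none; move: (none v) (none w); rewrite !inE => -> ->.
have /setP everyone : approvers E c = setT.
  by apply/eqP; rewrite eqEcard subsetT cardsT card_ord card_n /=.
by move: (everyone v) (everyone w); rewrite !inE => -> ->.
Qed.

Lemma agreement_share_eq1 c : agreement (approval_share c) = 1 <->
  #|approvers E c| = 0%N \/ #|approvers E c| = n.
Proof.
by rewrite agreement_eq1 ?approval_share_ge0_le1 // natr_ratio_eq0 // natr_ratio_eq1.
Qed.

Lemma agreement_share_eq0 c : agreement (approval_share c) = 0 <->
  #|approvers E c|%:R = n%:R / 2 :> rat.
Proof. by rewrite agreement_eq0 natr_ratio_eq_half. Qed.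

End Election.

Theorem proposition1 (m n : nat) (E : election m n) :
  (0 < m)%N -> (0 < n)%N ->
  (av_agr E = 1 <-> identity_election E) /\
  (av_agr E = 0 <->
     forall c : 'I_m, (#|approvers E c|)%:R = (n%:R : rat) / 2).
Proof.
move=> m_gt0 n_gt0; rewrite av_agrE.
have I_gt0 : (0 < #|'I_m|)%N by rewrite card_ord.
have agr_ge0 c := agreement_ge0 (approval_share E c).
have agr_le1 c := agreement_le1 (approval_share_ge0_le1 E c).
have := mean_eq1P I_gt0 agr_le1; have := mean_eq0P I_gt0 agr_ge0.
rewrite card_ord => -> ->; rewrite identity_electionP //.
split; split => all_c c.
- exact/(agreement_share_eq1 E n_gt0).
- exact/(agreement_share_eq1 E n_gt0).
- exact/(agreement_share_eq0 E n_gt0).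
- exact/(agreement_share_eq0 E n_gt0).
Qed.
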